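(* Let $h\in[0:H-1]$, let $\mathbf{A}\in\{-1,1\}^{(d/2)\times d}$, and let $\widetilde{\mathbf{A}}_h$ be a submatrix of $\mathbf{A}$ consisting of $d/2-s_{\le h}$ of its rows. Suppose $|\mathcal{N}(\mathsf{O}^{\mathbf{M}_\mathbf{A}}(\widetilde{\mathbf{A}}_h),\alpha_h)|\ge 2^{s_h/\log d}$. Then there exist $s_{h+1}$ rows $\mathbf{R}_h$ of $\widetilde{\mathbf{A}}_h$ such that the matrix $\widetilde{\mathbf{A}}_{h+1}=\widetilde{\mathbf{A}}_h\setminus\mathbf{R}_h$ obtained by deleting them satisfies $$\big|\mathsf{O}^{\mathbf{M}_\mathbf{A}}(\widetilde{\mathbf{A}}_{h+1})\cap\mathcal{N}(\mathsf{O}^{\mathbf{M}_\mathbf{A}}(\widetilde{\mathbf{A}}_h),\alpha_h)\big|\ge 2^{s_h/(2\log d)}.$$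
   Context: Setting: $d$ large, $\delta\in(0,1)$, $k=d^{1-\delta-o(1)}$, $s=d^{1-\delta/2}\log^2 d$, $\xi=2\exp(-\log^5 d)$, $\xi'=\sqrt d\xi$, $n\le d\exp(-\log d/\log\log d)$, $\Delta=d/n$. A fixed deterministic $(k,n)$-protocol: on $\mathbf{A}$ Alice sends $\mathbf{M}_\mathbf{A}\in\{0,1\}^{kd}$; Bob's output is a unit vector $\mathbf{x}_{\mathbf{M},\mathbf{v},\mathbf{R}}$ defined for every $\mathbf{M}\in\{0,1\}^{kd}$, $\mathbf{v}\in\frac1{\sqrt d}\{-1,1\}^d$, $\mathbf{R}\in(\{-1,1\}^d\cup\{\mathsf{nil}\})^n$. A fixed set $V^*\subseteq\frac1{\sqrt d}\{-1,1\}^d$. For a matrix $\mathbf{B}$ with rows in $\{-1,1\}^d$: $\mathsf{T}^{\mathbf{M}}(\mathbf{B})=\{\mathbf{x}_{\mathbf{M},\mathbf{v},\mathbf{R}}:\mathbf{v}\in V^*,\ \text{each entry of }\mathbf{R}\text{ is }\mathsf{nil}\text{ or a row of }\mathbf{B}\}$ and $\mathsf{O}^{\mathbf{M}}(\mathbf{B})=\{\mathbf{x}\in\mathsf{T}^{\mathbf{M}}(\mathbf{B}):\|\mathbf{B}\mathbf{x}\|_\infty\le\xi'\}$. $\mathcal{N}(X,\alpha)$: a largest subset of $X$ with pairwise Euclidean distances at least $\alpha$. Parameters: $H$ is the smallest integer with $\frac{s}{\log^2 d}(\frac{\Delta}{\log^5 d})^H\ge d/10$; $s_h=\frac{s}{\log^2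 d}(\frac{\Delta}{\log^5 d})^h$ for $h\in[0:H-1]$ and $s_H=d/10$; $s_{\le h}=\sum_{i=1}^h s_i$, $s_{\le0}=0$; $\alpha_0=d^{-8}$, $\alpha_h=\alpha_{h-1}^8$. *)

From HB Require Import structures.
From mathcomp Require Import all_boot all_order all_algebra.
From mathcomp Require Import all_classical all_reals all_analysis.
From mathcomp Require Import finmap.
Set Implicit Arguments. Unset Strict Implicit. Unset Printing Implicit Defensive.
Import Order.TTheory GRing.Theory Num.Theory.
Local Open Scope ring_scope.

(* Signs {-1,1} are encoded by bool
   (true |-> 1, false |-> -1).  log = natural log ln. *)

Definition sgnR {R : realType} (b : bool) : R := if b then 1 else -1.

Definition svec (d : nat) := {ffun 'I_d -> bool}.
Definition signmat (m d : nat) := {ffun 'I_m -> svec d}.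
Definition msg (k d : nat) := {ffun 'I_(k * d) -> bool}.
(* Bob's R in ({-1,1}^d \cup {nil})^n ; None = nil *)
Definition rowseq (n d : nat) := {ffun 'I_n -> option (svec d)}.

(* A deterministic (k,n)-protocol; Bob's input v in (1/sqrt d){-1,1}^d is
   represented by its sign vector. *)
Record protocol (R : realType) (d k n : nat) := Protocol {
  alice : signmat d./2 d -> msg k d;
  bob : msg k d -> svec d -> rowseq n d -> 'rV[R]_d
}.

Definition enorm {R : realType} {d : nat} (x : 'rV[R]_d) : R :=
  Num.sqrt (\sum_(i < d) x 0 i ^+ 2).

Definition unit_output {R : realType} {d k n : nat} (P : protocol R d k n) :=
  forall M v Rr, enorm (bob P M v Rr) = 1.

Definition xi {R : realType} (d : nat) : R := 2 * expR (- (ln (d%:R : R)) ^+ 5).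
Definition xi' {R : realType} (d : nat) : R := Num.sqrt (d%:R : R) * xi d.
Definition sparam {R : realType} (d : nat) (delta : R) : R :=
  (d%:R : R) `^ (1 - delta / 2) * (ln (d%:R : R)) ^+ 2.
Definition Delta {R : realType} (d n : nat) : R := (d%:R : R) / n%:R.
Definition s_raw {R : realType} (d : nat) (delta : R) (n h : nat) : R :=
  sparam d delta / (ln (d%:R : R)) ^+ 2 * (Delta d n / (ln (d%:R : R)) ^+ 5) ^+ h.
Definition isH {R : realType} (d : nat) (delta : R) (n H : nat) : Prop :=
  (d%:R / 10 <= s_raw d delta n H) /\
  (forall j : nat, (j < H)%N -> s_raw d delta n j < d%:R / 10).
Definition s_h {R : realType} (d : nat) (delta : R) (n H h : nat) : R :=
  if (h < H)%N then s_raw d delta n h else d%:R / 10.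
Definition s_hN {R : realType} (d : nat) (delta : R) (n H h : nat) : nat :=
  Num.truncn (s_h d delta n H h).
Definition s_leN {R : realType} (d : nat) (delta : R) (n H h : nat) : nat :=
  (\sum_(1 <= i < h.+1) s_hN d delta n H i)%N.
Fixpoint alpha {R : realType} (d : nat) (h : nat) : R :=
  match h with
  | 0%N => ((d%:R : R) ^+ 8)^-1
  | h'.+1 => (alpha d h') ^+ 8
  end.

Definition nbound {R : realType} (d : nat) : R :=
  (d%:R : R) * expR (- (ln (d%:R : R) / ln (ln (d%:R : R)))).

(* k(d) = d^{1 - delta - o(1)} *)
Definition k_rate {R : realType} (delta : R) (kf : nat -> nat) : Prop :=
  forall eps : R, 0 < eps -> exists D : nat, forall d : nat, (D <= d)%N ->
    (d%:R : R) `^ (1 - delta - eps) <= (kf d)%:R /\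
    ((kf d)%:R : R) <= (d%:R : R) `^ (1 - delta + eps).

(* Submatrix B of A given by the set S of kept row indices. *)
Definition valid_rows {d n : nat} (A : signmat d./2 d) (S : {set 'I_d./2})
  (Rr : rowseq n d) : Prop :=
  forall j, Rr j = None \/ exists2 i, i \in S & Rr j = Some (A i).

Definition inT {R : realType} {d k n : nat} (P : protocol R d k n)
  (Vs : {set svec d}) (A : signmat d./2 d) (S : {set 'I_d./2}) (x : 'rV[R]_d) : Prop :=
  exists v (Rr : rowseq n d), [/\ v \in Vs, valid_rows A S Rr &
                                  x = bob P (alice P A) v Rr].

Definition inO {R : realType} {d k n : nat} (P : protocol R d k n)
  (Vs : {set svec d}) (A : signmat d./2 d) (S : {set 'I_d./2}) (x : 'rV[R]_d) : Prop :=
  inT P Vs A S x /\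
  forall i, i \in S -> `| \sum_(j < d) sgnR (A i j) * x 0 j | <= xi' d.

Definition is_packing {R : realType} {d : nat} (X : 'rV[R]_d -> Prop)
  (N : {fset 'rV[R]_d}) (a : R) : Prop :=
  (forall x, x \in N -> X x) /\
  (forall x y, x \in N -> y \in N -> x != y -> a <= enorm (x - y)).
Definition is_max_packing {R : realType} {d : nat} (X : 'rV[R]_d -> Prop)
  (N : {fset 'rV[R]_d}) (a : R) : Prop :=
  is_packing X N a /\
  (forall N' : {fset 'rV[R]_d}, is_packing X N' a -> (#|` N'| <= #|` N|)%N).

From HB Require Import structures.
From mathcomp Require Import all_boot all_order all_algebra.
From mathcomp Require Import all_classical all_reals all_analysis.
From mathcomp Require Import finmap.
From mathcomp Require Import ring lra.
Set Implicit Arguments. Unset Strict Implicit. Unset Printing Implicit Defensive.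
Import Order.TTheory GRing.Theory Num.Theory.
Local Open Scope ring_scope.

(* A point of O(Ã_h) is Bob's output on some v and some rows R of Ã_h, so it
   stays in O after deleting any rows that avoid the at most n rows occurring in
   R: deleting rows only weakens the constraint ||B x||_oo <= xi'.  Delete rows
   greedily, each time one occurring in the supports of the fewest surviving
   points of the packing; by averaging this kills at most a fraction
   q = 4n/d of them, as at least d/4 rows remain.  After s_{h+1} steps at least
   |N| (1 - q)^{s_{h+1}} >= |N| exp(-2 q s_{h+1}) points survive, and
   q s_{h+1} <= 4 s_h / log^5 d because s_{h+1} <= s_h Delta / log^5 d, so
   the loss is a factor far smaller than 2^{s_h/(2 log d)}.  For large d the
   bound on n gives n <= d / (8 log^5 d), which is what makes q small. *)

Section GreedyDeletion.
Variables (I : finType) (T : Type) (W : T -> {set I}) (n : nat).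
Hypothesis card_W : forall x, (#|W x| <= n)%N.

Lemma exists_rarely_used (X : seq T) (P : {set I}) :
  P != finset.set0 ->
  exists2 i, i \in P & (#|P| * count (fun x => i \in W x) X <= n * size X)%N.
Proof.
case/finset.set0Pn => i0 i0P.
pose c i := count (fun x => i \in W x) X.
have [i iP c_min] := arg_minnP c i0P.
exists i => //; apply: (@leq_trans (\sum_(j in P) c j)).
  by rewrite -sum_nat_const; apply: leq_sum => j; exact: c_min.
rewrite /c; under eq_bigr => j _ do rewrite -sum1_count big_mkcond /=.
rewrite exchange_big /= -sum1_size big_distrr /= muln1; apply: leq_sum => x _.
apply: leq_trans (card_W x); rewrite -sum1_card [leqRHS]big_mkcond /=.
by rewrite [leqRHS](bigID (mem P)) /= leq_addr.
Qed.

Lemma greedy_avoiding_subset (R : realFieldType) (X : seq T) (S : {set I})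
    (q : R) (m : nat) :
  0 <= q <= 1 -> (m <= #|S|)%N -> n%:R <= q * (#|S| - m)%:R ->
  exists Rh : {set I}, [/\ Rh \subset S, #|Rh| = m &
    (size X)%:R * (1 - q) ^+ m <= (count (fun x => [disjoint Rh & W x]) X)%:R].
Proof.
move=> /andP[q_ge0 q_le1]; elim: m => [|m IHm] m_le n_le.
  exists finset.set0; rewrite finset.sub0set finset.cards0 expr0 mulr1 ler_nat.
  split=> //; rewrite -(count_predT X) sub_count // => x _.
  by rewrite -setI_eq0 finset.set0I.
have [|Rh [RhS cardRh surv]] := IHm (ltnW m_le).
  by apply: le_trans n_le _; rewrite ler_wpM2l // ler_nat leq_sub2l.
have card_rest : #|S :\: Rh| = (#|S| - m)%N.
  by rewrite cardsD (finset.setIidPr RhS) cardRh.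
have [i] : exists2 i, i \in S :\: Rh & (#|S :\: Rh| *
    count (fun x => i \in W x) (seq.filter (fun x => [disjoint Rh & W x]) X)
    <= n * size (seq.filter (fun x => [disjoint Rh & W x]) X))%N.
  by apply: exists_rarely_used; rewrite -card_gt0 card_rest subn_gt0.
set Y := seq.filter _ X; set c := count _ Y.
rewrite finset.in_setD => /andP[iRh iS] c_rare.
exists (i |: Rh); split.
- by rewrite finset.subUset finset.sub1set iS RhS.
- by rewrite finset.cardsU1 iRh cardRh.
have -> : count (fun x => [disjoint i |: Rh & W x]) X = (size Y - c)%N.
  rewrite -(count_predC (fun x => i \in W x) Y) addKn count_filter.
  apply: eq_count => x /=.
  rewrite (@eq_disjoint _ _ (predU1 i (mem Rh))) => [|z]; last by rewrite !inE.
  by rewrite disjointU1.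
have c_le : c%:R <= q * (size Y)%:R.
  have rest_gt0 : 0 < (#|S :\: Rh|)%:R :> R by rewrite ltr0n card_rest subn_gt0.
  rewrite -(ler_pM2l rest_gt0) -natrM mulrCA.
  apply: le_trans (_ : (n * size Y)%:R <= _); first by rewrite ler_nat.
  rewrite natrM mulrA ler_wpM2r //; apply: le_trans n_le _.
  by rewrite ler_wpM2l // card_rest ler_nat leq_sub2l.
rewrite natrB ?count_size // exprSr mulrA.
apply: le_trans (_ : (size Y)%:R * (1 - q) <= _).
  by rewrite ler_wpM2r ?subr_ge0 // /Y size_filter.
by rewrite mulrBr mulr1 lerD2l lerN2 mulrC.
Qed.

End GreedyDeletion.

Lemma inO_row_support (R : realType) (d k n : nat) (P : protocol R d k n)
    (Vs : {set svec d}) (A : signmat d./2 d) (S : {set 'I_d./2}) x :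
  inO P Vs A S x -> exists W : {set 'I_d./2}, [/\ W \subset S, (#|W| <= n)%N &
    forall S' : {set 'I_d./2}, W \subset S' -> S' \subset S -> inO P Vs A S' x].
Proof.
case=> [[v [Rr [vVs Rr_rows ->]]] Bx_small].
have /choice[g gP] : forall j, exists o : option 'I_d./2,
    Rr j = omap A o /\ (forall i, o = Some i -> i \in S).
  move=> j; case: (Rr_rows j) => [->|[i iS ->]]; first by exists None.
  by exists (Some i); split=> // _ [<-].
have memW i :
    (i \in [set:: pmap g (enum 'I_n)]) = (Some i \in map g (enum 'I_n)).
  by rewrite inE mem_pmap.
exists [set:: pmap g (enum 'I_n)]; split.
- apply/fintype.subsetP => i; rewrite memW => /mapP[j _ gj].
  exact: (gP j).2 i (esym gj).
- rewrite cardsE (leq_trans (card_size _)) // size_pmap.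
  by rewrite (leq_trans (count_size _ _)) ?size_enum_ord.
move=> S' WS' S'S; split.
  exists v, Rr; split=> // j; case: (gP j) => -> _.
  case gj: (g j) => [i|]; [right; exists i => // | by left].
  apply: (fintype.subsetP WS'); rewrite memW.
  by apply/mapP; exists j; rewrite ?mem_enum.
by move=> i iS'; apply: Bx_small; exact: (fintype.subsetP S'S).
Qed.

Lemma ln2_ge_half (R : realType) : 1 / 2 <= ln (2 : R).
Proof.
have e_half_le2 : expR (1 / 2 : R) <= 2.
  have := expR_ge1Dx (- (1 / 2) : R); have := expRxMexpNx_1 (1 / 2 : R).
  have := expR_gt0 (1 / 2 : R); nra.
by rewrite -[leLHS]expRK ler_ln ?posrE ?expR_gt0.
Qed.

Lemma expR_N2x_le_1B (R : realType) (q : R) :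
  0 <= q <= 1 / 2 -> expR (- (2 * q)) <= 1 - q.
Proof.
move=> /andP[q_ge0 q_le]; have := expR_ge1Dx (2 * q).
have := expRxMexpNx_1 (2 * q); have := expR_gt0 (- (2 * q)); nra.
Qed.

Lemma powR2_half_le (R : realType) (t u : R) :
  0 <= t -> u <= t / 4 -> 2 `^ (t / 2) <= 2 `^ t * expR (- u).
Proof.
move=> t_ge0 u_le; rewrite /powR pnatr_eq0 /= -expRD ler_expR.
have := ln2_ge_half R; nra.
Qed.

Lemma geometric_sumr_le (R : realFieldType) (a b : R) (h : nat) :
  0 <= a -> 1 < b ->
  (\sum_(1 <= i < h.+1) a * b ^+ i) * (b - 1) <= b * (a * b ^+ h).
Proof.
move=> a_ge0 b_gt1; elim: h => [|h IHh].
  by rewrite big_geq // mul0r !mulr_ge0 ?exprn_ge0 // ltW // (lt_trans ltr01).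
rewrite big_nat_recr //= mulrDl; apply: le_trans (lerD IHh (lexx _)) _.
by rewrite le_eqVlt; apply/orP; left; apply/eqP; rewrite !exprS; ring.
Qed.

Lemma pow5_le_expR_div_ln (R : realType) (L : R) :
  expR 20 <= L -> 8 * L ^+ 5 <= expR (L / ln L).
Proof.
move=> L_ge; have L_gt0 : 0 < L := lt_le_trans (expR_gt0 _) L_ge.
have u_ge : 20 <= ln L by rewrite -[leLHS]expRK ler_ln ?posrE ?expR_gt0.
have LE : L = expR (ln L) by rewrite lnK // posrE.
set u := ln L in u_ge LE *.
have u_gt0 : 0 < u by lra.
have L_ge_poly : 8 * u + 5 * u ^+ 2 <= L.
  rewrite LE; apply: le_trans (expR_ge1Dxn 3 (ltW u_gt0)).
  have -> : (3.+1)`! = 24%N by [].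
  have -> : u ^+ 4 = u ^+ 2 * u ^+ 2 by rewrite -exprD.
  have u2_ge : 400 <= u ^+ 2 by rewrite expr2; nra.
  have u4_ge : 13 * u ^+ 2 <= u ^+ 2 * u ^+ 2 / 24.
    by rewrite ler_pdivlMr; [nra | lra].
  nra.
apply: (@le_trans _ _ (expR (8 + 5 * u))); last first.
  by rewrite ler_expR ler_pdivlMr //; nra.
rewrite expRD expRM_natl -LE.
have e8_ge : 1 + 8 <= expR (8 : R) := expR_ge1Dx _.
have L5_ge0 : 0 <= L ^+ 5 by rewrite exprn_ge0 // ltW.
nra.
Qed.

Section ParameterBounds.
Variables (R : realType) (delta : R) (d n H h : nat).
Hypotheses (d_large : expR (expR 20) <= d%:R :> R) (d_even : ~~ odd d)
  (n_gt0 : (0 < n)%N) (n_le : n%:R <= nbound d :> R)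
  (HH : isH d delta n H) (hH : (h < H)%N).

Local Notation L := (ln (d%:R : R)).
Local Notation r := (Delta d n / L ^+ 5 : R).
Local Notation sh := (s_h d delta n H h).
Local Notation m := (s_hN d delta n H h.+1).
Local Notation q := (4 * n%:R / d%:R : R).

Let d_gt0 : 0 < d%:R :> R.
Proof. exact: lt_le_trans (expR_gt0 _) d_large. Qed.
Let n_gt0R : 0 < n%:R :> R. Proof. by rewrite ltr0n. Qed.

Let L_ge : expR 20 <= L.
Proof. by rewrite -[leLHS]expRK ler_ln ?posrE ?expR_gt0. Qed.

Let L_gt0 : 0 < L. Proof. exact: lt_le_trans (expR_gt0 _) L_ge. Qed.

Let L_ge21 : 21 <= L.
Proof. by apply: le_trans L_ge; apply: le_trans (expR_ge1Dx _); lra. Qed.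

Lemma n_mul_le : n%:R * (8 * L ^+ 5) <= d%:R.
Proof.
apply: le_trans (_ : n%:R * expR (L / ln L) <= _).
  by rewrite ler_pM2l // pow5_le_expR_div_ln.
by move: n_le; rewrite /nbound expRN -ler_pdivlMr ?expR_gt0.
Qed.

Lemma growth_ge8 : 8 <= r.
Proof.
have := n_mul_le; have := exprn_gt0 5 L_gt0.
by rewrite /Delta !ler_pdivlMr ?exprn_gt0 //; nra.
Qed.

Lemma s_rawS j : s_raw d delta n j.+1 = s_raw d delta n j * r.
Proof. by rewrite /s_raw [_ ^+ j.+1]exprSr mulrA. Qed.

Lemma s_raw_ge0 j : 0 <= s_raw d delta n j.
Proof.
have r_ge8 := growth_ge8; have L_ge0 := ltW L_gt0.
rewrite /s_raw /sparam mulr_ge0 ?divr_ge0 ?mulr_ge0 ?powR_ge0 ?exprn_ge0 //.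
lra.
Qed.

Lemma s_hE : sh = s_raw d delta n h.
Proof. by rewrite /s_h hH. Qed.

Lemma s_h_lt : sh < d%:R / 10.
Proof. by rewrite s_hE; exact: HH.2. Qed.

Lemma s_hN_succ_le : m%:R <= sh * r /\ m%:R <= d%:R / 10 :> R.
Proof.
rewrite s_hE -s_rawS /s_hN /s_h.
case: ltnP => [hH' | H_le].
  have m_le : (Num.truncn (s_raw d delta n h.+1))%:R <= s_raw d delta n h.+1.
    by rewrite truncn_le s_raw_ge0.
  by split=> //; exact: le_trans m_le (ltW (HH.2 _ hH')).
have -> : h.+1 = H by apply/eqP; rewrite eqn_leq hH.
have m_le : (Num.truncn (d%:R / 10 : R))%:R <= d%:R / 10 :> R.
  by rewrite truncn_le divr_ge0 // ltW.
by split=> //; exact: le_trans m_le HH.1.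
Qed.

Lemma s_leN_le : (s_leN d delta n H h)%:R <= d%:R * 8 / 70 :> R.
Proof.
have sh_lt := s_h_lt; have r_ge8 := growth_ge8.
have sum_le :
    (s_leN d delta n H h)%:R <= \sum_(1 <= i < h.+1) s_raw d delta n i.
  rewrite /s_leN natr_sum; apply: ler_sum_nat => i /andP[_ ih].
  by rewrite /s_hN /s_h (leq_trans ih hH) truncn_le s_raw_ge0.
have sum_ge0 : 0 <= \sum_(1 <= i < h.+1) s_raw d delta n i.
  by apply: sumr_ge0 => i _; exact: s_raw_ge0.
have a_ge0 : 0 <= sparam d delta / L ^+ 2.
  by have := s_raw_ge0 0; rewrite /s_raw expr0 mulr1.
have geom : (\sum_(1 <= i < h.+1) s_raw d delta n i) * (r - 1) <= r * sh.
  by rewrite s_hE; apply: geometric_sumr_le a_ge0 _; lra.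
nra.
Qed.

Lemma rows_left (S : {set 'I_d./2}) :
  #|S| = (d./2 - s_leN d delta n H h)%N ->
  (m <= #|S|)%N /\ d%:R / 4 <= (#|S| - m)%:R :> R.
Proof.
move=> cardS; have m_le := (s_hN_succ_le).2; have sle := s_leN_le.
have d_pos := d_gt0.
have half_d : (d./2)%:R = d%:R / 2 :> R.
  have := odd_double_half d; rewrite (negbTE d_even) add0n => d_eq.
  by rewrite -{2}d_eq -muln2 natrM; field.
have sleN_le : (s_leN d delta n H h <= d./2)%N.
  by rewrite -(ler_nat R) half_d; lra.
have cardSR : (#|S|)%:R = d%:R / 2 - (s_leN d delta n H h)%:R :> R.
  by rewrite cardS natrB // half_d.
have m_leS : (m <= #|S|)%N by rewrite -(ler_nat R) cardSR; lra.
by split=> //; rewrite natrB // cardSR; lra.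
Qed.

Lemma q_bounds : 0 <= q <= 1 / 2.
Proof.
apply/andP; split; first by rewrite divr_ge0 // mulr_ge0 // ltW.
have L5_ge1 : 1 <= L ^+ 5 by apply: exprn_ege1; have := L_ge21; lra.
have n8_le : n%:R * 8 <= d%:R :> R.
  apply: le_trans n_mul_le; rewrite ler_pM2l //; lra.
by rewrite ler_pdivrMr //; lra.
Qed.

Lemma deletion_rate_le : 2 * q * m%:R <= sh / L / 4.
Proof.
have sh_ge0 : 0 <= sh by rewrite s_hE s_raw_ge0.
have qr : q * r = 4 / L ^+ 4 / L.
  rewrite /Delta; field.
  by rewrite (gt_eqF L_gt0) (gt_eqF n_gt0R) (gt_eqF d_gt0).
apply: le_trans (_ : 2 * q * (sh * r) <= _).
  by rewrite ler_wpM2l ?(s_hN_succ_le).1 // mulr_ge0 // (q_bounds).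
have -> : 2 * q * (sh * r) = sh / L * (8 / L ^+ 4).
  have -> : 2 * q * (sh * r) = 2 * sh * (q * r) by ring.
  rewrite qr; ring.
rewrite ler_wpM2l ?divr_ge0 ?(ltW L_gt0) // ler_pdivrMr ?exprn_gt0 //.
have L4_ge : 32 <= L ^+ 4.
  have L2_ge : 441 <= L ^+ 2 by rewrite expr2; have := L_ge21; nra.
  have -> : L ^+ 4 = L ^+ 2 * L ^+ 2 by rewrite -exprD.
  nra.
lra.
Qed.

Lemma deletion_parameters (S : {set 'I_d./2}) :
  #|S| = (d./2 - s_leN d delta n H h)%N ->
  [/\ 0 <= q <= 1, (m <= #|S|)%N, n%:R <= q * (#|S| - m)%:R &
      2 `^ (sh / (2 * L)) <= 2 `^ (sh / L) * (1 - q) ^+ m].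
Proof.
move=> cardS; have [m_leS rest_ge] := rows_left cardS.
have /andP[q_ge0 q_le] := q_bounds.
split=> //; first by apply/andP; split; lra.
  apply: le_trans (ler_wpM2l q_ge0 rest_ge); rewrite le_eqVlt; apply/orP; left.
  by apply/eqP; field; rewrite gt_eqF.
have sh_ge0 : 0 <= sh by rewrite s_hE s_raw_ge0.
have -> : sh / (2 * L) = sh / L / 2 by field; rewrite gt_eqF.
have t_ge0 : 0 <= sh / L by rewrite divr_ge0 // ltW.
apply: le_trans (powR2_half_le t_ge0 deletion_rate_le) _.
rewrite ler_wpM2l ?powR_ge0 // -mulNr expRM_natr.
by rewrite lerXn2r ?nnegrE ?expR_ge0 ?subr_ge0 ?expR_N2x_le_1B //; lra.
Qed.

End ParameterBounds.

Local Open Scope fset_scope.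

Lemma count_le_card_fsep (K : choiceType) (N : {fset K}) (Q : pred K)
    (P : K -> Prop) :
  (forall x, x \in N -> Q x -> P x) ->
  (count Q N <= #|` [fset x in N | `[< P x >]]|)%N.
Proof.
move=> QP; rewrite -size_filter -(undup_id (filter_uniq Q (fset_uniq N))).
rewrite -(size_seq_fset tt); apply: fsubset_leq_card; apply/fsubsetP => x.
rewrite seq_fsetE mem_filter => /andP[Qx xN].
by rewrite !inE /= xN; apply/asboolP; exact: QP.
Qed.

Theorem lemma5p6 (R : realType) (delta : R) (kf : nat -> nat) :
  0 < delta < 1 -> k_rate delta kf ->
  exists d0 : nat, forall d : nat, (d0 <= d)%N -> ~~ odd d ->
  forall n : nat, (0 < n)%N -> (n%:R : R) <= nbound d ->
  forall P : protocol R d (kf d) n, unit_output P ->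
  forall (Vs : {set svec d}) (H h : nat), isH d delta n H -> (h < H)%N ->
  forall (A : signmat d./2 d) (S : {set 'I_d./2}),
  #|S| = (d./2 - s_leN d delta n H h)%N ->
  forall N : {fset 'rV[R]_d}, is_max_packing (inO P Vs A S) N (alpha d h) ->
  2 `^ (s_h d delta n H h / ln (d%:R : R)) <= (#|` N|)%:R ->
  exists Rh : {set 'I_d./2},
    [/\ Rh \subset S, #|Rh| = s_hN d delta n H h.+1 &
      2 `^ (s_h d delta n H h / (2 * ln (d%:R : R)))
        <= (#|` [fset x in N | `[< inO P Vs A (S :\: Rh) x >]] |)%:R].
Proof.
(* Only N being a subset of O(Ã_h) is used: neither the constraints on delta
   and k, nor unit outputs, nor the separation and maximality of N matter. *)
move=> _ _; exists (Num.truncn (expR (expR 20) : R)).+1.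
move=> d d_ge d_even n n_gt0 n_le P _ Vs H h HH hH A S cardS N [[N_O _] _].
move=> N_large.
have d_large : expR (expR 20) <= d%:R :> R.
  by apply: ltW; apply: lt_le_trans (truncnS_gt _) _; rewrite ler_nat.
have [q_01 m_le n_le_q loss] :=
  deletion_parameters d_large d_even n_gt0 n_le HH hH cardS.
have /choice[W HW] : forall x : 'rV[R]_d, exists W : {set 'I_d./2},
    (#|W| <= n)%N /\ (x \in N -> W \subset S /\ forall S' : {set 'I_d./2},
      W \subset S' -> S' \subset S -> inO P Vs A S' x).
  move=> x; case: (boolP (x \in N)) => [xN | _].
    by have [W [WS cardW supp]] := inO_row_support (N_O x xN); exists W.
  by exists finset.set0; rewrite finset.cards0.
have [Rh [RhS cardRh surv]] := greedy_avoiding_subset (fun x => (HW x).1)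
  (enum_fset N) q_01 m_le n_le_q.
exists Rh; split=> //; apply: le_trans loss _.
have /andP[_ q_le1] := q_01.
apply: le_trans (ler_wpM2r _ N_large) _; first by rewrite exprn_ge0 ?subr_ge0.
apply: le_trans surv _; rewrite ler_nat; apply: count_le_card_fsep => x xN disj.
have [WS supp] := (HW x).2 xN; apply: supp; last exact: subsetDl.
by rewrite subsetD WS disjoint_sym.
Qed.
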